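(* Let $P$ be an NL poset on $X_n$ whose twin classes $\alpha_1,\ldots,\alpha_r$ all have the same size $m\ge1$. Then $H=\mathrm{Aut}(P_\equiv)$, where $H=\{\psi\in\mathrm{Aut}(P_\equiv): |\psi(\alpha)|=|\alpha| \text{ for every twin class }\alpha\}$. Moreover, $\mathrm{Aut}(P)\cong\mathrm{Aut}(P_\equiv)$ if and only if $m=1$, i.e., every twin class is a singleton.
   Context: Let $X_n=\{0,1,\ldots,n-1\}$. A naturally labeled (NL) poset on $X_n$ is a partial order $\preceq$ on $X_n$ such that $x\preceq y$ implies $x\le y$ in the usual integer order. $\mathrm{Aut}(P)$ is the group of bijections $\sigma$ of $X_n$ with $x\preceq y\iff\sigma(x)\preceq\sigma(y)$. For $x\in X_n$, $D(x)=\{z: z\prec x\}$, $U(x)=\{z: x\prec z\}$; $x,y$ are twins if $D(x)=D(y)$ and $U(x)=U(y)$, and the equivalence classes are the twin classes. The twin poset $P_\equiv$ is the set of twin classes ordered by $\alpha\preceq_\equiv\beta$ iff $x\preceq y$ for (any) $x\in\alpha$, $y\in\beta$; $\mathrm{Aut}(P_\equiv)$ is its automorphism group. *)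

From mathcomp Require Import all_boot all_fingroup.
Set Implicit Arguments. Unset Strict Implicit. Unset Printing Implicit Defensive.

(* X_n = 'I_n ; a partial order is given by a boolean relation le. *)
Section Poset.
Variable n : nat.
Variable le : rel 'I_n.

Definition NLposet : Prop :=
  [/\ reflexive le, antisymmetric le, transitive le &
      forall x y : 'I_n, le x y -> (x <= y)%N].

Definition downset (x : 'I_n) : {set 'I_n} := [set z | le z x & z != x].
Definition upset (x : 'I_n) : {set 'I_n} := [set z | le x z & z != x].

Definition twins (x y : 'I_n) : bool := (downset x == downset y) && (upset x == upset y).

Definition twin_class (x : 'I_n) : {set 'I_n} := [set y | twins x y].

(* the set of twin classes = carrier of the twin poset P_≡ *)
Definition twin_classes : {set {set 'I_n}} := [set twin_class x | x in 'I_n].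

(* order of P_≡ : alpha ≼ beta iff x ≼ y for (any, equivalently some) x in alpha, y in beta *)
Definition twin_le (a b : {set 'I_n}) : bool := [exists x in a, exists y in b, le x y].

Definition AutP : {set {perm 'I_n}} :=
  [set s : {perm 'I_n} | [forall x, forall y, le x y == le (s x) (s y)]].

(* Aut(P_≡): bijections of the set of twin classes preserving the twin order,
   represented as permutations of {set 'I_n} supported on twin_classes *)
Definition AutPeq : {set {perm {set 'I_n}}} :=
  [set psi : {perm {set 'I_n}} | perm_on twin_classes psi &&
     [forall a in twin_classes, forall b in twin_classes,
        twin_le a b == twin_le (psi a) (psi b)]].

Definition AutPeq_size : {set {perm {set 'I_n}}} :=
  [set psi in AutPeq | [forall a in twin_classes, #|psi a| == #|a|]].
End Poset.

From mathcomp Require Import all_boot all_fingroup.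
Set Implicit Arguments. Unset Strict Implicit. Unset Printing Implicit Defensive.

(* Twins have the same strict down- and up-sets, so the order of P is read off
   the twin poset: x <= y iff x = y, or x and y lie in distinct classes that are
   comparable in P_≡.  Hence a size-preserving automorphism psi of P_≡ lifts to
   an automorphism of P by matching each class a with psi a through their
   enumerations, which injects H into Aut(P); when all classes have the same
   size, H is all of Aut(P_≡).  A transposition of two twins is an
   automorphism of P outside the image of this lift, so for m >= 2 the groups
   have different orders.  For m = 1 the classes are the singletons and
   s |-> ({x} |-> {s x}) is an isomorphism Aut(P) -> Aut(P_≡). *)

(* Total version of [perm]: the identity when [g] is not injective, so that it
   applies to [twin_lift psi] for every [psi]. *)
Definition perm_of (T : finType) (g : T -> T) : {perm T} :=
  insubd (1%g : {perm T}) [ffun x => g x].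

Lemma perm_ofE (T : finType) (g : T -> T) : injective g -> perm_of g =1 g.
Proof.
move=> g_inj x; rewrite /perm_of.
have g_injb : injectiveb [ffun x => g x].
  by apply/injectiveP=> a b; rewrite !ffunE; apply: g_inj.
by rewrite unlock /= insubdK // ffunE.
Qed.

Section Twins.
Variables (n : nat) (le : rel 'I_n).
Local Notation tc := (twin_class le).
Local Notation TC := (twin_classes le).

Hypothesis le_refl : reflexive le.

Lemma twins_refl x : twins le x x.
Proof. by rewrite /twins !eqxx. Qed.

Lemma mem_twin_class x y : (y \in tc x) = (tc x == tc y).
Proof.
rewrite {1}/twin_class inE; apply/idP/eqP.
  by case/andP=> /eqP dxy /eqP uxy; apply/setP=> z; rewrite !inE /twins dxy uxy.
move=> exy; have : y \in tc y by rewrite inE twins_refl.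
by rewrite -exy inE.
Qed.

Lemma twin_class_self x : x \in tc x.
Proof. by rewrite mem_twin_class. Qed.

Lemma twinsE x y : twins le x y = (tc x == tc y).
Proof. by rewrite -mem_twin_class inE. Qed.

Lemma twin_classesP A : reflect (exists x, A = tc x) (A \in TC).
Proof. by apply: (iffP imsetP) => [[x _ ->]|[x ->]]; exists x. Qed.

Lemma twin_class_in x : tc x \in TC.
Proof. by apply/twin_classesP; exists x. Qed.

Lemma le_twin_classE x y :
  le x y = (x == y) || (tc x != tc y) && twin_le le (tc x) (tc y).
Proof.
have downE a b : tc a = tc b -> downset le a = downset le b.
  by move/eqP; rewrite -twinsE => /andP[/eqP].
have upE a b : tc a = tc b -> upset le a = upset le b.
  by move/eqP; rewrite -twinsE => /andP[_ /eqP].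
apply/idP/idP => [lxy | ].
  case: eqP => //= /eqP nxy; apply/andP; split.
    apply/eqP=> exy; have : x \in downset le y by rewrite inE lxy nxy.
    by rewrite -(downE _ _ exy) inE eqxx andbF.
  apply/existsP; exists x; rewrite twin_class_self /=.
  by apply/existsP; exists y; rewrite twin_class_self.
case/orP=> [/eqP -> // | /andP[ne /existsP[x' /andP[xx' /existsP[y' /andP[yy' lx'y']]]]]].
move: xx' yy'; rewrite !mem_twin_class => /eqP ex /eqP ey.
have nx'y' : x' != y' by apply: contraNneq ne => e; rewrite ex ey e.
have : x' \in downset le y' by rewrite inE lx'y' nx'y'.
rewrite -(downE _ _ ey) inE => /andP[lx'y nx'y].
have : y \in upset le x' by rewrite inE lx'y eq_sym nx'y.
by rewrite -(upE _ _ ex) inE => /andP[].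
Qed.

Lemma twin_le_set1 x y : twin_le le [set x] [set y] = le x y.
Proof.
apply/existsP/idP => [[x' /andP[/set1P -> /existsP[y' /andP[/set1P -> //]]]] | lxy].
by exists x; rewrite set11 /=; apply/existsP; exists y; rewrite set11.
Qed.

Lemma AutP_le s : s \in AutP le -> forall x y, le (s x) (s y) = le x y.
Proof. by rewrite inE => /forallP sP x y; move: (sP x) => /forallP /(_ y) /eqP. Qed.

Lemma AutPeq_perm_on psi : psi \in AutPeq le -> perm_on TC psi.
Proof. by rewrite inE => /andP[]. Qed.

Lemma AutPeq_twin_le psi a b : psi \in AutPeq le -> a \in TC -> b \in TC ->
  twin_le le (psi a) (psi b) = twin_le le a b.
Proof.
rewrite inE => /andP[_ /forallP psiP] aT bT.
by move: (psiP a); rewrite aT => /forallP /(_ b); rewrite bT => /eqP.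
Qed.

Lemma AutPeq_closed psi a : psi \in AutPeq le -> (psi a \in TC) = (a \in TC).
Proof. by move/AutPeq_perm_on/perm_closed. Qed.

Lemma group_set_AutP : group_set (AutP le).
Proof.
apply/group_setP; split.
  by rewrite inE; apply/forallP=> x; apply/forallP=> y; rewrite !perm1.
move=> s t sA tA; rewrite inE; apply/forallP=> x; apply/forallP=> y.
by rewrite !permM (AutP_le tA) (AutP_le sA).
Qed.

Lemma group_set_AutPeq : group_set (AutPeq le).
Proof.
apply/group_setP; split.
  rewrite inE perm_on1; apply/forallP=> a; apply/implyP=> _.
  by apply/forallP=> b; apply/implyP=> _; rewrite !perm1.
move=> s t sA tA; rewrite inE perm_onM ?AutPeq_perm_on //=.
apply/forallP=> a; apply/implyP=> aT; apply/forallP=> b; apply/implyP=> bT.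
by rewrite !permM (AutPeq_twin_le tA) ?AutPeq_closed // AutPeq_twin_le.
Qed.

Canonical AutP_group := Group group_set_AutP.
Canonical AutPeq_group := Group group_set_AutPeq.

Lemma AutPeq_size_sub psi : psi \in AutPeq_size le -> psi \in AutPeq le.
Proof. by rewrite inE => /andP[]. Qed.

Lemma AutPeq_sizeE m : (forall a, a \in TC -> #|a| = m) ->
  AutPeq_size le = AutPeq le.
Proof.
move=> card_TC; apply/setP=> psi; rewrite inE andb_idr // => psiA.
by apply/forallP=> a; apply/implyP=> aT; rewrite !card_TC ?AutPeq_closed.
Qed.

Definition twin_lift (psi : {perm {set 'I_n}}) (x : 'I_n) : 'I_n :=
  nth x (enum (psi (tc x))) (index x (enum (tc x))).

Lemma twin_lift_fix (psi : {perm {set 'I_n}}) x :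
  psi (tc x) = tc x -> twin_lift psi x = x.
Proof. by rewrite /twin_lift => ->; rewrite nth_index // mem_enum twin_class_self. Qed.

Section Lift.
Variable psi : {perm {set 'I_n}}.
Hypothesis psiH : psi \in AutPeq_size le.

Let psiA : psi \in AutPeq le := AutPeq_size_sub psiH.

Lemma index_twin_class_lt x y : y \in tc x ->
  index y (enum (tc x)) < size (enum (psi (tc x))).
Proof.
move: psiH; rewrite inE => /andP[_ /forallP /(_ (tc x))].
by rewrite twin_class_in -!cardE => /eqP -> yx; rewrite cardE index_mem mem_enum.
Qed.

Lemma twin_lift_mem x : twin_lift psi x \in psi (tc x).
Proof.
by rewrite /twin_lift -mem_enum mem_nth ?index_twin_class_lt ?twin_class_self.
Qed.

Lemma twin_class_lift x : tc (twin_lift psi x) = psi (tc x).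
Proof.
have /twin_classesP[w ew] : psi (tc x) \in TC by rewrite AutPeq_closed ?twin_class_in.
by have := twin_lift_mem x; rewrite ew mem_twin_class => /eqP.
Qed.

Lemma twin_lift_inj : injective (twin_lift psi).
Proof.
move=> x y e.
have exy : tc x = tc y by apply: (@perm_inj _ psi); rewrite -!twin_class_lift e.
have xy : x \in tc y by rewrite mem_twin_class exy.
move: e; rewrite /twin_lift exy (set_nth_default y x) ?index_twin_class_lt //.
move/eqP; rewrite nth_uniq ?enum_uniq ?index_twin_class_lt ?twin_class_self //.
by move/eqP; apply: (index_inj x); rewrite mem_enum ?twin_class_self.
Qed.

Lemma twin_lift_le x y : le (twin_lift psi x) (twin_lift psi y) = le x y.
Proof.
rewrite (le_twin_classE (twin_lift psi x)) (le_twin_classE x).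
rewrite !twin_class_lift (inj_eq twin_lift_inj) (inj_eq perm_inj).
by rewrite AutPeq_twin_le ?twin_class_in.
Qed.

End Lift.

Definition lift_perm psi := perm_of (twin_lift psi).

Lemma lift_permE psi : psi \in AutPeq_size le -> lift_perm psi =1 twin_lift psi.
Proof. by move=> psiH; apply/perm_ofE/twin_lift_inj. Qed.

Lemma lift_perm_AutP psi : psi \in AutPeq_size le -> lift_perm psi \in AutP le.
Proof.
move=> psiH; rewrite inE; apply/forallP=> x; apply/forallP=> y.
by rewrite !lift_permE // twin_lift_le.
Qed.

Lemma lift_perm_inj : {in AutPeq_size le &, injective lift_perm}.
Proof.
move=> psi phi psiH phiH e; apply/permP => A.
have [/twin_classesP[x ->] | nA] := boolP (A \in TC).
  by rewrite -(twin_class_lift psiH) -(twin_class_lift phiH) -!lift_permE // e.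
by rewrite !(out_perm (AutPeq_perm_on (AutPeq_size_sub _))).
Qed.

Lemma card_AutPeq_size_le : #|AutPeq_size le| <= #|AutP le|.
Proof.
rewrite -(card_in_imset lift_perm_inj); apply/subset_leq_card/subsetP.
by move=> s /imsetP[psi psiH ->]; apply: lift_perm_AutP.
Qed.

Lemma card_AutPeq_size_lt x : 1 < #|tc x| -> #|AutPeq_size le| < #|AutP le|.
Proof.
move=> tc_gt1; have /card_gt0P[y] : 0 < #|tc x :\ x|.
  by move: tc_gt1; rewrite (cardsD1 x) twin_class_self.
rewrite !inE twinsE => /andP[nyx /eqP exy].
have tc_tperm z : tc (tperm x y z) = tc z.
  by case: tpermP => [->|->|//]; rewrite exy.
have tA : tperm x y \in AutP le.
  rewrite inE; apply/forallP=> a; apply/forallP=> b.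
  rewrite (le_twin_classE a) (le_twin_classE (tperm x y a)).
  by rewrite !tc_tperm (inj_eq perm_inj).
have tN : tperm x y \notin lift_perm @: AutPeq_size le.
  apply/imsetP=> [[psi psiH e]].
  have psi_x : psi (tc x) = tc x.
    by rewrite -(twin_class_lift psiH) -lift_permE // -e tc_tperm.
  have := twin_lift_fix psi_x; rewrite -lift_permE // -e tpermL.
  by move/eqP; rewrite (negbTE nyx).
rewrite -(card_in_imset lift_perm_inj).
have := cardsU1 (tperm x y) (lift_perm @: AutPeq_size le); rewrite tN add1n => <-.
apply/subset_leq_card/subsetP => s /setU1P[-> // | /imsetP[psi psiH ->]].
exact: lift_perm_AutP.
Qed.

Section Singletons.
Hypothesis card_twin_classes1 : forall a, a \in TC -> #|a| = 1.

Lemma twin_class1 x : tc x = [set x].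
Proof.
have /cards1P[w ew] : #|tc x| == 1 by rewrite card_twin_classes1 ?twin_class_in.
by have := twin_class_self x; rewrite ew inE => /eqP <-.
Qed.

Lemma set1_twin_classes x : [set x] \in TC.
Proof. by rewrite -twin_class1 twin_class_in. Qed.

(* Sets that are not twin classes must be fixed, as [AutPeq] consists of
   permutations supported on [twin_classes]. *)
Definition twin_act (s : {perm 'I_n}) (A : {set 'I_n}) : {set 'I_n} :=
  if A \in TC then s @: A else A.

Lemma twin_act_inj s : injective (twin_act s).
Proof.
have act_TC A : (twin_act s A \in TC) = (A \in TC).
  rewrite /twin_act; case: ifP => // /twin_classesP[x ->].
  by rewrite twin_class1 imset_set1 !set1_twin_classes.
move=> A B e; have eT : (A \in TC) = (B \in TC) by rewrite -act_TC e act_TC.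
by move: e; rewrite /twin_act -eT; case: ifP => // _; apply/imset_inj/perm_inj.
Qed.

Definition twin_perm s := perm_of (twin_act s).

Lemma twin_perm_set1 s x : twin_perm s [set x] = [set s x].
Proof.
rewrite perm_ofE; last exact: twin_act_inj.
by rewrite /twin_act set1_twin_classes imset_set1.
Qed.

Lemma twin_perm_out s A : A \notin TC -> twin_perm s A = A.
Proof.
move=> nA; rewrite perm_ofE; last exact: twin_act_inj.
by rewrite /twin_act (negbTE nA).
Qed.

Lemma twin_perm_morph : {in [set: {perm 'I_n}] &, {morph twin_perm : s t / (s * t)%g}}.
Proof.
move=> s t _ _; apply/permP=> A; rewrite permM.
have [/twin_classesP[x ->] | nA] := boolP (A \in TC); last by rewrite !twin_perm_out.
by rewrite twin_class1 !twin_perm_set1 permM.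
Qed.

Lemma twin_perm_inj : injective twin_perm.
Proof.
move=> s t e; apply/permP=> x.
by apply/set1_inj; rewrite -!twin_perm_set1 e.
Qed.

Lemma twin_perm_AutPeq s : s \in AutP le -> twin_perm s \in AutPeq le.
Proof.
move=> sA; rewrite inE; apply/andP; split.
  by apply/subsetP=> A; rewrite inE; apply: contraR => nA; rewrite twin_perm_out.
apply/forallP=> a; apply/implyP=> /twin_classesP[x ->].
apply/forallP=> b; apply/implyP=> /twin_classesP[y ->].
by rewrite !twin_class1 !twin_perm_set1 !twin_le_set1 (AutP_le sA).
Qed.

Lemma AutP_isog_AutPeq : AutP le \isog AutPeq le.
Proof.
pose f := Morphism (D := [set: {perm 'I_n}]) twin_perm_morph.
have f_inj : ('injm f)%g by apply/injmP=> s t _ _; apply: twin_perm_inj.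
have fA : (f @* AutP le)%g = AutPeq le.
  apply/eqP; rewrite eqEcard; apply/andP; split.
    rewrite morphimEsub ?subsetT //; apply/subsetP=> p /imsetP[s sA ->].
    exact: twin_perm_AutPeq.
  by rewrite card_injm ?subsetT // -(AutPeq_sizeE card_twin_classes1) card_AutPeq_size_le.
by rewrite -fA sub_isog ?subsetT.
Qed.

End Singletons.
End Twins.

Theorem proposition4p9 (n : nat) (le : rel 'I_n) (m : nat) :
  NLposet le -> (0 < n)%N -> (1 <= m)%N ->
  (forall a, a \in twin_classes le -> #|a| = m) ->
  AutPeq_size le = AutPeq le /\
  ((AutP le \isog AutPeq le) <-> m = 1%N).
Proof.
case=> le_refl _ _ _ n_gt0 m_gt0 card_TC.
split; first exact: AutPeq_sizeE card_TC.
split=> [iso | m1]; last by apply: AutP_isog_AutPeq => //; rewrite -m1.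
apply/eqP; rewrite eqn_leq m_gt0 andbT leqNgt; apply/negP=> m_gt1.
have tc_gt1 : 1 < #|twin_class le (Ordinal n_gt0)| by rewrite card_TC ?twin_class_in.
have := card_AutPeq_size_lt le_refl tc_gt1.
by rewrite (AutPeq_sizeE card_TC) (card_isog iso) ltnn.
Qed.
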